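(* Consider $S=\mathbb{Z}_+$ with convolution $*$ defined on point masses by $\delta_m*\delta_n=\delta_{\max\{m,n\}}$ if $m\ne n$ or $m=n=0$, and $\delta_n*\delta_n=q_n$ for $n\ge1$, where each $q_n=\sum_{j\in Q_n}q_n(j)\delta_j$ is a probability measure with finite support $Q_n\ni 0$ and $q_n(j)>0$ for $j\in Q_n$. Assume: for $n\ge1$, $\mathcal{L}_n\subset Q_n\subset\mathcal{L}_n\cup\{n\}$ where $\mathcal{L}_n=\{k:k<n\}$; and for $0<m<n$, $q_n(0)=q_n(m)q_m(0)$ and $q_n(0)\bigl(1+\sum_{0<k<n}1/q_k(0)\bigr)\le1$. Let $\lambda$ be the Haar measure of the hermitian discrete hypergroup $(S,* )$, and let $v_n=\lambda(n)$, $u_n=\lambda(n)-\lambda(\mathcal{L}_n)$. Then $\mathcal{X}_b(S)=\widehat{S}$, and $\widehat{S}$ with the topology of uniform convergence on compact subsets of $S$ is identified with the one-point compactification $\mathbb{Z}_+^*=\mathbb{Z}_+\cup\{\infty\}$ via $k\mapsto\chi_k$, where $\chi_\infty(n)=1$ for all $n\in\mathbb{Z}_+$ and, for $k\in\mathbb{Z}_+$, $\chi_k(n)=1$ if $n\le k$, $\chi_k(n)=\beta_k$ if $n=k+1$, and $\chi_k(n)=0$ if $n>k+1$, with $\beta_k=-\frac{\lambda(\mathcal{L}_{k+1})}{\lambda(k+1)}=-\frac{\sum_{j\in\mathcal{L}_{k+1}}v_j}{v_{k+1}}=\frac{u_{k+1}}{v_{k+1}}-1=(\delta_{k+1}*\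delta_{k+1})(k+1)-1=q_{k+1}(k+1)-1.$
   Context: $\mathbb{Z}_+=\{0,1,2,\dots\}$. Under the stated assumptions $(S,* )$ is a hermitian discrete hypergroup: $*$ is associative, $0$ is the identity, $*$ is commutative, and $0\in\operatorname{spt}(\delta_m*\delta_n)$ iff $m=n$. Its Haar measure $\lambda$ is given by $\lambda(0)=1$, $\lambda(n)=1/(\delta_n*\delta_n)(0)$ for $n\ge1$, $\lambda(A)=\sum_{j\in A}\lambda(j)$. For a complex function $\chi$ on $S$ write $\chi(m*n)=\int\chi\,d(\delta_m*\delta_n)$. $\mathcal{X}_b(S)$ is the set of nonzero bounded functions $\chi$ on $S$ with $\chi(m*n)=\chi(m)\chi(n)$ for all $m,n$ (characters); $\widehat{S}$ is the set of $\chi\in\mathcal{X}_b(S)$ with $\chi(m)=\overline{\chi(m)}$ for all $m$ (symmetric characters, the involution being the identity). *)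

From HB Require Import structures.
From mathcomp Require Import all_boot all_order all_algebra.
From mathcomp Require Import all_classical all_reals all_analysis.
From mathcomp Require Import complex.
Import Order.TTheory GRing.Theory Num.Theory.

Set Implicit Arguments.
Unset Strict Implicit.
Unset Printing Implicit Defensive.

Local Open Scope ring_scope.
Local Open Scope classical_set_scope.

(* Complex numbers C = R[i], with the topology/uniformity of its norm
   (the modulus), obtained through the regular alias ^o. *)
Notation Cx R := ((R[i])^o).

Notation Ffam R := {family compact, nat -> Cx R}.

Section HypergroupDefs.
Variable R : realType.
Local Notation C := (Cx R).

Definition hg_rc (x : R) : C := (x%:C)%C.

(* q n j = q_n(j): the mass at j of q_n = delta_n * delta_n (n >= 1). *)
Variable q : nat -> nat -> R.

Definition hg_qsupp (n : nat) : set nat := [set j | q n j != 0].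

Definition hg_Lset (n : nat) : set nat := [set k | (k < n)%N].

Definition hg_qhyp : Prop :=
  (forall n, (0 < n)%N ->
     [/\ (forall j, hg_qsupp n j -> 0 < q n j),
         hg_qsupp n 0%N,
         hg_Lset n `<=` hg_qsupp n,
         hg_qsupp n `<=` hg_Lset n `|` [set n] &
         \sum_(j < n.+1) q n j = 1 ]) /\
  (forall m n, (0 < m)%N -> (m < n)%N ->
     q n 0%N = q n m * q m 0%N /\
     q n 0%N * (1 + \sum_(1 <= k < n) (q k 0%N)^-1) <= 1).

Definition hg_conv (m n j : nat) : R :=
  if (m != n) || (m == 0%N) then (j == maxn m n)%:R else q n j.

(* chi(m * n) = int chi d(delta_m * delta_n); the measure delta_m*delta_n is
   supported in {0, ..., max m n} under hg_qhyp, so the integral is this sum. *)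
Definition hg_chi_conv (chi : nat -> C) (m n : nat) : C :=
  \sum_(j < (maxn m n).+1) hg_rc (hg_conv m n j) * chi j.

Definition hg_lam (n : nat) : R := if n == 0%N then 1 else (hg_conv n n 0%N)^-1.
Definition hg_lamL (n : nat) : R := \sum_(j < n) hg_lam j.

Definition hg_vv (n : nat) : R := hg_lam n.
Definition hg_uu (n : nat) : R := hg_lam n - hg_lamL n.

Definition hg_Xb : set (nat -> C) :=
  [set chi | (exists n, chi n != 0)
           /\ (exists M : R, forall n, `|chi n| <= hg_rc M)
           /\ (forall m n, hg_chi_conv chi m n = chi m * chi n)].

(* symmetric characters S^ (involution = identity) *)
Definition hg_Shat : set (nat -> C) :=
  [set chi | hg_Xb chi /\ forall m, chi m = (chi m)^*].

Definition hg_beta (k : nat) : R := q k.+1 k.+1 - 1.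

(* k |-> chi_k on Z_+^* = Z_+ u {oo}, with None = oo *)
Definition hg_chik (k : one_point_compactification nat) : Ffam R :=
  match k with
  | None => fun _ => 1
  | Some k => fun n => if (n <= k)%N then 1
                       else if n == k.+1 then hg_rc (hg_beta k) else 0
  end.

End HypergroupDefs.

Definition hg_homeo_onto (X Y : topologicalType) (f : X -> Y) (A : set Y) : Prop :=
  [/\ injective f, range f = A, continuous f &
      forall U : set X, open U -> exists V : set Y, open V /\ f @` U = V `&` A].

(* A character chi satisfies chi (max m n) = chi m * chi n for m <> n, so it
   equals 1 below every point where it does not vanish.  If chi is not
   identically 1, let k.+1 be the first point with chi k.+1 <> 1: the relation
   for delta_(k+1) * delta_(k+1) is the quadratic (c - 1) (c - beta_k) = 0 in
   c = chi k.+1, hence chi k.+1 = beta_k < 0, and then chi vanishes beyond k.+1.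
   Conversely every chi_k is a real bounded character, so X_b(S) = S^ is the
   range of k |-> chi_k.  This map is a continuous injection of the compact
   space Z_+^* into a Hausdorff space (continuity at oo because chi_k = 1 on
   [0, k]), hence a homeomorphism onto its range. *)

From HB Require Import structures.
From mathcomp Require Import all_boot all_order all_algebra.
From mathcomp Require Import all_classical all_reals all_analysis.
From mathcomp Require Import complex.
From mathcomp Require Import ring lra zify.
Import Order.TTheory GRing.Theory Num.Theory.
Set Implicit Arguments.
Unset Strict Implicit.
Local Open Scope ring_scope.
Local Open Scope classical_set_scope.

Section HaarMeasure.
Variables (R : realType) (q : nat -> nat -> R).
Hypothesis hq : hg_qhyp q.

Lemma q0_gt0 n : (0 < n)%N -> 0 < q n 0.
Proof.
by move=> n0; have [/(_ n n0) [qpos supp0 _ _ _] _] := hq; exact: qpos supp0.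
Qed.

Lemma sum_q n : (0 < n)%N -> \sum_(j < n.+1) q n j = 1.
Proof. by move=> n0; have [/(_ n n0) [_ _ _ _ ->] _] := hq. Qed.

Lemma lamE n : (0 < n)%N -> hg_lam q n = (q n 0)^-1.
Proof. by case: n => // n _; rewrite /hg_lam /hg_conv eqxx. Qed.

Lemma lam_gt0 n : 0 < hg_lam q n.
Proof. by case: n => [|n]; rewrite ?ltr01 // lamE // invr_gt0 q0_gt0. Qed.

Lemma lamL_gt0 n : 0 < hg_lamL q n.+1.
Proof.
rewrite /hg_lamL big_ord_recl ltr_pwDl ?lam_gt0 //.
by apply: sumr_ge0 => i _; exact/ltW/lam_gt0.
Qed.

Lemma q_lam n j : (j < n)%N -> q n j = q n 0 * hg_lam q j.
Proof.
case: j => [|j] jn; first by rewrite mulr1.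
have [_ /(_ j.+1 n isT jn) [-> _]] := hq.
by rewrite lamE // mulrK // unitfE gt_eqF // q0_gt0.
Qed.

Lemma sum_q_lt n : \sum_(j < n) q n j = q n 0 * hg_lamL q n.
Proof. by rewrite /hg_lamL big_distrr; apply: eq_bigr => j _; rewrite q_lam. Qed.

Lemma beta_lamL k : hg_beta q k = - (hg_lamL q k.+1 / hg_lam q k.+1).
Proof.
rewrite /hg_beta -(sum_q (ltn0Sn k)) big_ord_recr /= sum_q_lt lamE // invrK.
ring.
Qed.

Lemma beta_lt0 k : hg_beta q k < 0.
Proof. by rewrite beta_lamL oppr_lt0 divr_gt0 ?lamL_gt0 ?lam_gt0. Qed.

Lemma beta_identities k :
  [/\ hg_beta q k = - (hg_lamL q k.+1 / hg_lam q k.+1),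
      hg_beta q k = - ((\sum_(j < k.+1) hg_vv q j) / hg_vv q k.+1),
      hg_beta q k = hg_uu q k.+1 / hg_vv q k.+1 - 1 &
      hg_beta q k = hg_conv q k.+1 k.+1 k.+1 - 1].
Proof.
split; rewrite ?beta_lamL //.
- by rewrite /hg_uu /hg_vv mulrBl divff ?gt_eqF ?lam_gt0 // addrC addKr.
- by rewrite /hg_conv eqxx -beta_lamL.
Qed.

End HaarMeasure.

Section RealEmbedding.
Variable R : realType.
Local Notation C := (Cx R).

HB.instance Definition _ := GRing.RMorphism.copy (@hg_rc R) (real_complex R).

Lemma hg_rc_inj : injective (@hg_rc R).
Proof. by move=> x y []. Qed.

Lemma norm_hg_rc (x : R) : `|hg_rc x| = hg_rc `|x| :> C.
Proof. by rewrite normc_def /= expr0n /= addr0 sqrtr_sqr. Qed.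

Lemma conj_hg_rc (x : R) : (hg_rc x : C)^* = hg_rc x.
Proof. exact: conjc_real. Qed.

End RealEmbedding.

Section Characters.
Variables (R : realType) (q : nat -> nat -> R).
Hypothesis hq : hg_qhyp q.
Local Notation C := (Cx R).
Implicit Types chi : nat -> C.

Lemma chi_conv_max chi m n : (m != n) || (m == 0)%N ->
  hg_chi_conv q chi m n = chi (maxn m n).
Proof.
move=> mn; rewrite /hg_chi_conv /hg_conv mn big_ord_recr /= eqxx rmorph1 mul1r.
rewrite big1 ?add0r // => j _.
by rewrite (ltn_eqF (ltn_ord j)) rmorph0 mul0r.
Qed.

Lemma chi_conv_diag chi n : (0 < n)%N ->
  hg_chi_conv q chi n n = \sum_(j < n.+1) hg_rc (q n j) * chi j.
Proof. by case: n => // n _; rewrite /hg_chi_conv /hg_conv eqxx maxnn. Qed.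

Lemma real_character_Shat (f : nat -> R) :
  f 0%N = 1 -> (exists M, forall n, `|f n| <= M) ->
  (forall m n, (m != n) || (m == 0)%N -> f (maxn m n) = f m * f n) ->
  (forall n, (0 < n)%N -> \sum_(j < n.+1) q n j * f j = f n * f n) ->
  hg_Shat q (fun n => hg_rc (f n) : C).
Proof.
move=> f0 [M fM] f_max f_diag; split; last by move=> m; rewrite conj_hg_rc.
split; first by exists 0%N; rewrite f0 rmorph1 oner_neq0.
split; first by exists M => n; rewrite norm_hg_rc lecR.
move=> m n; have [mn|] := boolP ((m != n) || (m == 0)%N).
  by rewrite chi_conv_max // f_max // rmorphM.
rewrite negb_or negbK -lt0n => /andP[/eqP <- m0].
rewrite chi_conv_diag // -rmorphM -f_diag // rmorph_sum.
by apply: eq_bigr => j _; rewrite rmorphM.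
Qed.

Definition chik_real k n : R :=
  if (n <= k)%N then 1 else if n == k.+1 then hg_beta q k else 0.

Lemma chikE k :
  hg_chik q (Some k) = (fun n => hg_rc (chik_real k n)) :> (nat -> C).
Proof.
apply/funext => n; rewrite /= /chik_real.
by case: ifP => _; [rewrite rmorph1|case: ifP => _; rewrite ?rmorph0].
Qed.

Lemma chik_real_max k m n : (m != n) || (m == 0)%N ->
  chik_real k (maxn m n) = chik_real k m * chik_real k n.
Proof.
have one_or_zero a b : (a < b)%N -> chik_real k a = 1 \/ chik_real k b = 0.
  rewrite /chik_real => ab; have [bk|bk] := leqP b k.+1.
    by left; rewrite ifT //; lia.
  by right; rewrite !ifF //; lia.
have [mn|nm|<-] := ltngtP m n => [_|_|/= /eqP->].
- by case: (one_or_zero _ _ mn) => ->; rewrite ?mul1r ?mulr0.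
- by case: (one_or_zero _ _ nm) => ->; rewrite ?mulr1 ?mul0r.
- by rewrite /chik_real /= mulr1.
Qed.

Lemma sum_q_chik_real k n : (k < n)%N ->
  \sum_(j < n.+1) q n j * chik_real k j =
  \sum_(j < k.+1) q n j + q n k.+1 * hg_beta q k.
Proof.
move=> kn; rewrite -(big_mkord xpredT (fun j => q n j * chik_real k j)).
rewrite (@big_cat_nat _ _ _ k.+2) //=.
rewrite [X in _ + X = _]big1_seq ?addr0; last first.
  move=> j /andP[_]; rewrite mem_index_iota => /andP[kj _].
  by rewrite /chik_real !ifF ?mulr0 //; lia.
rewrite big_nat_recr //= big_mkord /chik_real ltnn eqxx; congr (_ + _).
by apply: eq_bigr => j _; rewrite ifT ?mulr1 //; have := ltn_ord j.
Qed.

Lemma chik_real_diag k n : (0 < n)%N ->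
  \sum_(j < n.+1) q n j * chik_real k j = chik_real k n * chik_real k n.
Proof.
move=> n0; have [nk|kn] := leqP n k.
  rewrite {2 3}/chik_real nk mulr1 -(sum_q hq n0); apply: eq_bigr => j _.
  by rewrite /chik_real ifT ?mulr1 //; have := ltn_ord j; lia.
rewrite sum_q_chik_real //; have [->|nk1] := eqVneq n k.+1.
  rewrite /chik_real ltnn eqxx /hg_beta.
  have := sum_q hq (ltn0Sn k); rewrite big_ord_recr /= => /(canRL (addrK _)) ->.
  ring.
rewrite /chik_real !ifF //; try lia.
rewrite (eq_bigr (fun j : 'I_k.+1 => q n 0 * hg_lam q j)); last first.
  by move=> j _; rewrite (q_lam hq) //; have := ltn_ord j; lia.
rewrite -big_distrr [q n k.+1](q_lam hq) /=; last by lia.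
have [-> _ _ _] := beta_identities hq k.
rewrite /hg_lamL mulr0; field.
by rewrite gt_eqF ?lam_gt0.
Qed.

Lemma chik_Shat x : hg_Shat q (hg_chik q x).
Proof.
case: x => [k|].
  rewrite chikE; apply: real_character_Shat.
  - by rewrite /chik_real.
  - exists (1 + `|hg_beta q k|) => n; rewrite /chik_real.
    case: ifP => _; first by rewrite normr1 lerDl.
    case: ifP => _; first by rewrite lerDr.
    by rewrite normr0 addr_ge0.
  - exact: chik_real_max.
  - exact: chik_real_diag.
rewrite [hg_chik _ _](_ : _ = fun n => hg_rc 1); last first.
  by apply/funext => n; rewrite rmorph1.
apply: real_character_Shat => //.
- by exists 1 => n; rewrite normr1.
- by move=> m n _; rewrite mulr1.
- by move=> n n0; under eq_bigr do rewrite mulr1; rewrite sum_q ?mulr1.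
Qed.

End Characters.

Section Classification.
Variables (R : realType) (q : nat -> nat -> R).
Hypothesis hq : hg_qhyp q.
Local Notation C := (Cx R).
Variable chi : nat -> C.
Hypothesis chi_neq0 : exists n, chi n != 0.
Hypothesis chi_mul : forall m n, hg_chi_conv q chi m n = chi m * chi n.

Lemma chi_max m n : (m != n) || (m == 0)%N -> chi (maxn m n) = chi m * chi n.
Proof. by move=> mn; rewrite -(chi_conv_max q). Qed.

Lemma chi_one_below m n : chi n != 0 -> (m < n)%N -> chi m = 1.
Proof.
move=> n_neq0 mn; apply: (mulIf n_neq0).
by rewrite mul1r -chi_max ?(ltn_eqF mn) ?(maxn_idPr (ltnW mn)).
Qed.

Lemma chi0 : chi 0%N = 1.
Proof.
have [n n_neq0] := chi_neq0; apply: (mulIf n_neq0).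
by rewrite mul1r -chi_max ?eqxx ?orbT ?max0n.
Qed.

Lemma chi_after_ones n : (0 < n)%N -> (forall j, (j < n)%N -> chi j = 1) ->
  chi n = 1 \/ chi n = hg_rc (q n n - 1).
Proof.
move=> n0 ones; have := chi_mul n n.
rewrite chi_conv_diag // big_ord_recr /=.
rewrite (eq_bigr (fun j : 'I_n => hg_rc (q n j))); last first.
  by move=> j _; rewrite ones ?mulr1.
rewrite -rmorph_sum.
have := sum_q hq n0; rewrite big_ord_recr /= => /(canRL (addrK _)) ->.
rewrite !rmorphB rmorph1 => /eqP; rewrite -subr_eq0.
rewrite (_ : _ - _ = - ((chi n - 1) * (chi n - (hg_rc (q n n) - 1)))); last by ring.
by rewrite oppr_eq0 mulf_eq0 !subr_eq0 => /orP[] /eqP; [left|right].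
Qed.

Lemma character_chik : exists x, chi = hg_chik q x.
Proof.
have [all_one|] := pselect (forall n, chi n = 1).
  by exists None; apply/funext.
move=> /existsNP some_not_one.
have : exists n, chi n != 1 by have [n /eqP] := some_not_one; exists n.
case/ex_minnP=> -[|k]; first by rewrite chi0 eqxx.
move=> chik_neq1 first_neq1.
have ones j : (j < k.+1)%N -> chi j = 1.
  by move=> jk; apply/eqP; apply: contraTT jk => /first_neq1; rewrite -leqNgt.
have chik1 : chi k.+1 = hg_rc (hg_beta q k).
  case: (chi_after_ones (ltn0Sn k) ones) => // chik_eq1.
  by rewrite chik_eq1 eqxx in chik_neq1.
exists (Some k); apply/funext => n /=.
case: ifPn => [nk|]; first by apply: ones.
rewrite -ltnNge; case: eqVneq => [->//|nk1 kn].
by apply: contraNeq chik_neq1 => /(chi_one_below (m := k.+1)) -> //; lia.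
Qed.

End Classification.

Section FamilyCompact.
Variables (U : topologicalType) (V : uniformType).

Lemma eval_continuous (t : U) :
  continuous (fun g : {family compact, U -> V} => g t).
Proof.
move=> g B /nbhsP [E entE EB].
have ct : compact [set t] by exact: compact_set1.
have := @fam_nbhs U V compact [set t] E g entE ct.
by apply: filterS => h /(_ t erefl) Eh; apply: EB; rewrite /xsection /= inE.
Qed.

Lemma family_compact_hausdorff :
  hausdorff_space V -> hausdorff_space {family compact, U -> V}.
Proof.
move=> hV f g fg; apply/funext => t; apply: hV => A B At Bt.
have [h [/= Ah Bh]] := fg _ _ (eval_continuous At) (eval_continuous Bt).
by exists (h t).
Qed.

End FamilyCompact.

Lemma compact_injective_homeo_onto (X Y : topologicalType) (f : X -> Y) :
  compact [set: X] -> hausdorff_space Y -> injective f -> continuous f ->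
  hg_homeo_onto f (range f).
Proof.
move=> cX hY f_inj f_cont; split => // A oA.
have cfAc : closed (f @` ~` A).
  apply: compact_closed => //; apply: continuous_compact.
    exact: continuous_subspaceT.
  by apply: (subclosed_compact _ cX) => //; exact: open_closedC.
exists (~` (f @` ~` A)); split; first exact: closed_openC.
apply/seteqP; split => [_ [x Ax <-]|y [fAc [x _ fxy]]].
  by split; [move=> [z Acz /f_inj zx]; apply: Acz; rewrite zx|exists x].
by exists x => //; apply: contrapT => Acx; apply: fAc; exists x.
Qed.

Local Notation opc := (one_point_compactification nat).

Lemma compact_nat_bounded (A : set nat) :
  compact A -> exists M, forall n, A n -> (n < M)%N.
Proof.
rewrite compact_cover => cA.
have [D _ AD] := cA nat setT (fun i => [set n | (n < i)%N])
  (fun i _ => discrete_open _) (fun n _ => ex_intro2 _ _ n.+1 I (ltnSn n)).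
exists (\max_(i <- finmap.enum_fset D) i) => n /AD [i /= iD ni].
exact: leq_trans ni (@leq_bigmax_seq _ _ xpredT id i iD erefl).
Qed.

Lemma nbhs_opc_Some (k : nat) (P : set opc) :
  P (Some k) -> nbhs (Some k : opc) P.
Proof.
move=> Pk; have : nbhs k (Some @^-1` P).
  by rewrite nbhs_principalE; exact/principal_filterP.
exact.
Qed.

Lemma nbhs_opc_None (M : nat) :
  nbhs (None : opc) [set y | if y is Some n then (M <= n)%N else true].
Proof.
exists `I_M.
  by split; [exact/finite_compact/finite_II|exact: discrete_closed].
by move=> [n|] // [[m /= mM [<-]]|//]; rewrite leqNgt; exact/negP.
Qed.

Section CharacterTopology.
Variables (R : realType) (q : nat -> nat -> R).
Hypothesis hq : hg_qhyp q.
Local Notation C := (Cx R).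
Local Notation chik := (hg_chik q).

Lemma chik_continuous : continuous chik.
Proof.
move=> [k|]; first by move=> P /nbhs_singleton; exact: nbhs_opc_Some.
have chik_filter : Filter (chik @ nbhs (None : opc)) by exact: fmap_filter.
apply/(@fam_cvgP nat C compact _ _ chik_filter) => A /compact_nat_bounded [M AM].
move=> P /uniform_nbhs [E [entE EP]].
apply: filterS (nbhs_opc_None M) => -[n|] /= Mn; apply: EP => t At /=.
  by rewrite ifT; [exact: entourage_refl|have := AM t At; lia].
exact: entourage_refl.
Qed.

Lemma chik_injective : injective chik.
Proof.
have chik_Some_inj k y : chik y = chik (Some k) -> y = Some k.
  move/(congr1 (fun chi : nat -> C => chi k.+1)); rewrite /= ltnn eqxx.
  have beta_neq r : 0 <= r -> hg_rc r <> hg_rc (hg_beta q k) :> C.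
    by move=> r_ge0 /hg_rc_inj rE; have := beta_lt0 hq k; lra.
  case: y => [l|] /=; rewrite -?(rmorph0 (@hg_rc R)) -?(rmorph1 (@hg_rc R)).
  - case: ifP => _; first by move/(beta_neq _ ler01).
    by case: ifP => [/eqP [->] //|_ /(beta_neq _ (lexx 0))].
  - by move/(beta_neq _ ler01).
move=> [k|] [l|] //.
- by move/esym/chik_Some_inj.
- by move/esym/chik_Some_inj.
- by move/chik_Some_inj.
Qed.

Lemma chik_range : range chik = hg_Shat q.
Proof.
apply/seteqP; split => [_ [x _ <-]|chi [[chi_neq0 [_ chi_mul]] _]].
  exact: chik_Shat.
by have [x ->] := character_chik hq chi_neq0 chi_mul; exists x.
Qed.

Lemma Xb_eq_Shat : hg_Xb q = hg_Shat q.
Proof.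
apply/seteqP; split => [chi [chi_neq0 [_ chi_mul]]|chi []//].
by have [x ->] := character_chik hq chi_neq0 chi_mul; exact: chik_Shat.
Qed.

End CharacterTopology.

Unset Implicit Arguments.
Set Strict Implicit.

Theorem theorem3p6 (R : realType) (q : nat -> nat -> R) :
  hg_qhyp q ->
  [/\ hg_Xb q = hg_Shat q,
      @hg_homeo_onto (one_point_compactification nat) (Ffam R) (hg_chik q) (hg_Shat q :> set (Ffam R)) &
      forall k : nat,
        [/\ hg_beta q k = - (hg_lamL q k.+1 / hg_lam q k.+1),
            hg_beta q k = - ((\sum_(j < k.+1) hg_vv q j) / hg_vv q k.+1),
            hg_beta q k = hg_uu q k.+1 / hg_vv q k.+1 - 1 &
            hg_beta q k = hg_conv q k.+1 k.+1 k.+1 - 1] ].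
Proof.
move=> hq; split; [exact: Xb_eq_Shat| |exact: beta_identities].
rewrite -(chik_range hq); apply: compact_injective_homeo_onto.
- exact: one_point_compactification_compact.
- exact/family_compact_hausdorff/norm_hausdorff.
- exact: chik_injective.
- exact: chik_continuous.
Qed.
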